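(* Let $V$ be a vertex algebra and $M$ a subspace of $V$ with $C_2(V)\subseteq M$ and $\dim_{\mathbb{C}}M/C_2(V)<\infty$. Then $M$ is an $MZ_{0,-1}$-subspace of $V$ if and only if $r(M/C_2(V))$ is an ideal of the commutative associative algebra $V/C_2(V)$.
   Context: A vertex algebra $(V,Y,\mathbf{1})$ is over $\mathbb{C}$; for $u\in V$ write $Y(u,z)=\sum_{n\in\mathbb{Z}}u_nz^{-n-1}$ with $u_n\in\operatorname{End}V$. Iterated products are nested to the right: $v_{n_1}\cdots v_{n_t}v=v_{n_1}(\cdots(v_{n_t}v))$. $C_2(V)=\operatorname{span}_{\mathbb{C}}\{u_{-2}v: u,v\in V\}$; $V/C_2(V)$ is a commutative associative unital algebra with product $(a+C_2(V))(b+C_2(V))=a_{-1}b+C_2(V)$. For a subspace $M\subseteq V$: $r_{0,-1}(M)$ is the set of $v\in V$ for which there is $m\ge 0$ with $v_{n_1}\cdots v_{n_t}v\in M$ for all $t\ge m$ and all $n_1,\dots,n_t\in\{0,-1\}$. $lsr_{0,-1}(M)$ is the set of $v\in V$ such that for every $b\in V$ there is $m\ge0$ with $b_sv_{n_1}\cdots v_{n_t}v\in M$ for all $t\ge m$ and all $s,n_1,\dots,n_t\in\{0,-1\}$. $rsr_{0,-1}(M)$ is the set of $v\in V$ such that for every $w\in V$ there is $m\ge 0$ with $(v_{n_1}\cdots v_{n_t}v)_nw\in M$ for all $t\ge m$ and all $n,n_1,\dots,n_t\in\{0,-1\}$. $sr_{0,-1}(M)=lsr_{0,-1}(M)\cap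 rsr_{0,-1}(M)$. $M$ is an $MZ_{0,-1}$-subspace of $V$ if $r_{0,-1}(M)=sr_{0,-1}(M)$. For a commutative associative unital algebra $A$ and a subspace $U$: $r(U)=\{a\in A:\exists m\ge1,\ a^t\in U\ \forall t\ge m\}$. *)

From HB Require Import structures.
From mathcomp Require Import all_boot all_order all_algebra.
From mathcomp Require Import reals.
From mathcomp Require Import complex.
Set Implicit Arguments. Unset Strict Implicit. Unset Printing Implicit Defensive.
Import Order.TTheory GRing.Theory Num.Theory.
Local Open Scope ring_scope.

(* Vertex algebras: the mode map is Y u n v = u_n v  (Y(u,z) = sum u_n z^{-n-1}). *)
Section VA.
Variables (K : fieldType) (V : lmodType K).

Definition binz (p : int) (i : nat) : K :=
  (\prod_(k < i) (p - (k : int))%:~R) / (i`!)%:R.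

(* Axioms of a vertex algebra (Frenkel-Lepowsky-Meurman / Lepowsky-Li), with the
   Jacobi identity written in its component (Borcherds) form.  The infinite sums in
   the Borcherds identity have finite support; they are evaluated as the sums over
   i < N for any N beyond which all summands vanish. *)
Record is_vertex_algebra (Y : V -> int -> V -> V) (one : V) : Prop := {
  va_linl : forall (n : int) (v : V) (a : K) (u1 u2 : V),
      Y (a *: u1 + u2) n v = a *: Y u1 n v + Y u2 n v;
  va_linr : forall (u : V) (n : int) (a : K) (v1 v2 : V),
      Y u n (a *: v1 + v2) = a *: Y u n v1 + Y u n v2;
  va_trunc : forall u v : V, exists N : int, forall n : int, N <= n -> Y u n v = 0;
  va_vacuum : forall (n : int) (v : V), Y one n v = if n == -1 then v else 0;
  va_creation : forall (u : V) (n : int), 0 <= n -> Y u n one = 0;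
  va_creation1 : forall u : V, Y u (-1) one = u;
  va_jacobi : forall (u v w : V) (p q r : int) (N : nat),
      (forall i : nat, (N <= i)%N ->
         [/\ Y u (r + i%:Z) v = 0, Y v (q + i%:Z) w = 0 & Y u (p + i%:Z) w = 0]) ->
      \sum_(i < N) binz p i *: Y (Y u (r + i%:Z) v) (p + q - i%:Z) w =
      \sum_(i < N) ((-1) ^+ i * binz r i) *:
          (Y u (p + r - i%:Z) (Y v (q + i%:Z) w)
           - (-1) ^ r *: Y v (q + r - i%:Z) (Y u (p + i%:Z) w))
}.

Variables (Y : V -> int -> V -> V).

Definition is_subspace (M : V -> Prop) : Prop :=
  M 0 /\ forall (a : K) (x y : V), M x -> M y -> M (a *: x + y).

Definition span (S : V -> Prop) (x : V) : Prop :=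
  exists (n : nat) (f : 'I_n -> V) (c : 'I_n -> K),
    (forall i, S (f i)) /\ x = \sum_(i < n) c i *: f i.

Definition C2 (x : V) : Prop := span (fun y => exists u v, y = Y u (-2) v) x.

Definition fin_dim_mod_C2 (M : V -> Prop) : Prop :=
  exists (n : nat) (f : 'I_n -> V), (forall i, M (f i)) /\
    forall x, M x -> exists c : 'I_n -> K, C2 (x - \sum_(i < n) c i *: f i).

(* v_{n_1} ... v_{n_t} x, nested to the right, for s = [:: n_1; ...; n_t] *)
Definition iter_mode (v : V) (s : seq int) (x : V) : V :=
  foldr (fun n y => Y v n y) x s.

Definition in01 (n : int) : bool := (n == 0) || (n == -1).
Definition all01 (s : seq int) : bool := all in01 s.

Definition r01 (M : V -> Prop) (v : V) : Prop :=
  exists m : nat, forall s : seq int, all01 s -> (m <= size s)%N ->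
    M (iter_mode v s v).

Definition lsr01 (M : V -> Prop) (v : V) : Prop :=
  forall b : V, exists m : nat, forall (s : seq int) (k : int),
    in01 k -> all01 s -> (m <= size s)%N -> M (Y b k (iter_mode v s v)).

Definition rsr01 (M : V -> Prop) (v : V) : Prop :=
  forall w : V, exists m : nat, forall (s : seq int) (n : int),
    in01 n -> all01 s -> (m <= size s)%N -> M (Y (iter_mode v s v) n w).

Definition sr01 (M : V -> Prop) (v : V) : Prop := lsr01 M v /\ rsr01 M v.

Definition MZ01_subspace (M : V -> Prop) : Prop :=
  forall v : V, r01 M v <-> sr01 M v.

(* The algebra A = V/C_2(V) is handled through representatives: the class of a
   is a + C_2(V), the product is (a + C2)(b + C2) = a_{-1} b + C2.
   powrep a k is a representative of (a + C2)^(k+1). *)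
Fixpoint powrep (a : V) (k : nat) : V :=
  if k is k'.+1 then Y a (-1) (powrep a k') else a.

(* For U = M / C_2(V) (with C_2(V) ⊆ M), the class a + C2 lies in U iff a ∈ M.
   rep_r M a  <->  a + C_2(V) ∈ r(M / C_2(V)). *)
Definition rep_r (M : V -> Prop) (a : V) : Prop :=
  exists m : nat, (1 <= m)%N /\ forall t : nat, (m <= t)%N -> M (powrep a t.-1).

(* P ⊆ V is the preimage of an ideal of A = V/C_2(V): it contains C_2(V), is a
   subspace, and is stable under multiplication by A. *)
Definition is_ideal_preimage (P : V -> Prop) : Prop :=
  [/\ forall x, C2 x -> P x,
      is_subspace P &
      forall b a : V, P a -> P (Y b (-1) a)].

End VA.

From Pilot Require Import Defs.
From HB Require Import structures.
From mathcomp Require Import all_boot all_order all_algebra.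
From mathcomp Require Import reals.
From mathcomp Require Import complex.
From mathcomp Require Import boolp zify ring.
Set Implicit Arguments. Unset Strict Implicit. Unset Printing Implicit Defensive.
Import Order.TTheory GRing.Theory Num.Theory.
Local Open Scope ring_scope.

(** Modulo C_2(V), an iterate v_{n_1} ... v_{n_t} v with n_i in {0,-1} vanishes as
    soon as some n_i = 0 (v_0 v is in C_2(V), which is stable under u_0 and u_{-1});
    otherwise it is the power v^{t+1} in A = V/C_2(V). Moreover, modulo C_2(V),
    b_0 v^t = t (b_0 v) v^{t-1} and (v^t)_0 w = - w_0 v^t. With U = M/C_2(V), the set
    r_{0,-1}(M) thus becomes r(U), and M is an MZ_{0,-1}-subspace iff every a in r(U)
    absorbs A: for each b, b a^t is in U for all large t.

    As U is finite-dimensional, the powers of a in r(U) that lie in U are linearly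
    dependent, which gives a^L = a^{L+1} p(a) with L > 0; then e = a^L p(a)^L is
    idempotent and a^L e = a^L. If every a in r(U) absorbs A, the threshold can be
    taken independent of b, and such uniformly absorbing elements form an ideal,
    which is r(U). Conversely, if r(U) is an ideal, then all of eA lies in U, and
    b a^t is in eA for t >= L. *)

Section GeneralizedBinomial.
Variable K : numFieldType.

Lemma binz0 p : binz K p 0 = 1.
Proof. by rewrite /binz big_ord0 fact0 invr1 mulr1. Qed.

Lemma binzS p i : binz K p i.+1 = binz K p i * (p - i%:Z)%:~R / i.+1%:R.
Proof. by rewrite /binz big_ord_recr /= factS natrM invfM; ring. Qed.

Lemma binz0S i : binz K 0 i.+1 = 0.
Proof. by rewrite /binz big_ord_recl /= subr0 !mul0r. Qed.

Lemma binzN1 i : binz K (-1) i = (-1) ^+ i.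
Proof.
elim: i => [|i IH]; first by rewrite binz0.
rewrite binzS IH exprS -opprD -[1 + i%:Z]/(i.+1%:Z) mulrNz.
by field; rewrite -(natrD K 1 i) pnatr_eq0.
Qed.

Lemma binzN2 i : binz K (-2) i = (-1) ^+ i * i.+1%:R.
Proof.
elim: i => [|i IH]; first by rewrite binz0 expr0 mul1r.
rewrite binzS IH exprS -opprD -[2 + i%:Z]/(i.+2%:Z) mulrNz.
by field; rewrite -(natrD K 1 i) pnatr_eq0.
Qed.

End GeneralizedBinomial.

Section Subspace.
Variables (K : fieldType) (V : lmodType K).

Section Closure.
Variables (P : V -> Prop) (subP : is_subspace P).

Lemma subspace0 : P 0.
Proof. by case: subP. Qed.

Lemma subspaceZD a x y : P x -> P y -> P (a *: x + y).
Proof. by case: subP => _; apply. Qed.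

Lemma subspaceD x y : P x -> P y -> P (x + y).
Proof. by move=> Px Py; have := subspaceZD 1 Px Py; rewrite scale1r. Qed.

Lemma subspaceZ a x : P x -> P (a *: x).
Proof. by move=> Px; have := subspaceZD a Px subspace0; rewrite addr0. Qed.

Lemma subspaceN x : P x -> P (- x).
Proof. by rewrite -scaleN1r; apply: subspaceZ. Qed.

Lemma subspaceB x y : P x -> P y -> P (x - y).
Proof. by move=> Px Py; apply/subspaceD/subspaceN. Qed.

Lemma subspaceMn x k : P x -> P (x *+ k).
Proof.
move=> Px; elim: k => [|k IH]; first by rewrite mulr0n; apply: subspace0.
by rewrite mulrS; apply: subspaceD.
Qed.

Lemma subspace_sum (I : finType) (F : I -> V) : (forall i, P (F i)) -> P (\sum_i F i).
Proof. by move=> PF; apply: (big_ind P) => //; [apply: subspace0 | apply: subspaceD]. Qed.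

End Closure.

(* Qualified, since [span] alone is MathComp's [vector.span]. *)
Lemma span_subspace (S : V -> Prop) : is_subspace (Defs.span S).
Proof.
split; first by exists 0%N, (fun _ => 0), (fun _ => 0); split=> [[]|]; rewrite ?big_ord0.
move=> a x y [n [f [c [Sf ->]]]] [m [g [d [Sg ->]]]].
exists (n + m)%N, (fun i => match split i with inl j => f j | inr j => g j end),
  (fun i => match split i with inl j => a * c j | inr j => d j end); split.
  by move=> i; case: (split i).
rewrite big_split_ord /= scaler_sumr; congr (_ + _); apply: eq_bigr => i _.
  by rewrite (unsplitK (inl i)) scalerA.
by rewrite (unsplitK (inr i)).
Qed.

Lemma span_gen (S : V -> Prop) x : S x -> Defs.span S x.
Proof.
by move=> Sx; exists 1%N, (fun _ => x), (fun _ => 1); rewrite big_ord1 scale1r.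
Qed.

Lemma span_min (S P : V -> Prop) :
  is_subspace P -> (forall x, S x -> P x) -> forall x, Defs.span S x -> P x.
Proof.
move=> subP SP x [n [f [c [Sf ->]]]].
by apply: subspace_sum => // i; apply/(subspaceZ subP)/SP.
Qed.

End Subspace.

Section ModeLinearity.
Variables (K : fieldType) (V : lmodType K) (Y : V -> int -> V -> V) (one : V).
Hypothesis HVA : is_vertex_algebra Y one.

Lemma mode0r u n : Y u n 0 = 0.
Proof.
have := va_linr HVA u n 1 0 0; rewrite !scale1r addr0 => h.
by apply: (addrI (Y u n 0)); rewrite addr0 -h.
Qed.

Lemma modeDr u n x y : Y u n (x + y) = Y u n x + Y u n y.
Proof. by have := va_linr HVA u n 1 x y; rewrite !scale1r. Qed.

Lemma modeZr u n a x : Y u n (a *: x) = a *: Y u n x.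
Proof. by have := va_linr HVA u n a x 0; rewrite !addr0 mode0r addr0. Qed.

Lemma modeBr u n x y : Y u n (x - y) = Y u n x - Y u n y.
Proof. by rewrite modeDr -scaleN1r modeZr scaleN1r. Qed.

Lemma mode0l v n : Y 0 n v = 0.
Proof.
have := va_linl HVA n v 1 0 0; rewrite !scale1r addr0 => h.
by apply: (addrI (Y 0 n v)); rewrite addr0 -h.
Qed.

Lemma modeDl u1 u2 n v : Y (u1 + u2) n v = Y u1 n v + Y u2 n v.
Proof. by have := va_linl HVA n v 1 u1 u2; rewrite !scale1r. Qed.

Lemma modeZl a u n v : Y (a *: u) n v = a *: Y u n v.
Proof. by have := va_linl HVA n v a u 0; rewrite !addr0 mode0l addr0. Qed.

Lemma modeBl u1 u2 n v : Y (u1 - u2) n v = Y u1 n v - Y u2 n v.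
Proof. by rewrite modeDl -scaleN1r modeZl scaleN1r. Qed.

Lemma subspace_preimr (P : V -> Prop) u n :
  is_subspace P -> is_subspace (fun x => P (Y u n x)).
Proof.
move=> subP; split=> [|a x y Px Py]; first by rewrite mode0r; apply: subspace0.
by rewrite modeDr modeZr; apply: subspaceZD.
Qed.

Lemma subspace_preiml (P : V -> Prop) n w :
  is_subspace P -> is_subspace (fun x => P (Y x n w)).
Proof.
move=> subP; split=> [|a x y Px Py]; first by rewrite mode0l; apply: subspace0.
by rewrite modeDl modeZl; apply: subspaceZD.
Qed.

Lemma borcherds u v w p q r : exists N0 : nat, forall N, (N0 <= N)%N ->
  \sum_(i < N) binz K p i *: Y (Y u (r + i%:Z) v) (p + q - i%:Z) w =
  \sum_(i < N) ((-1) ^+ i * binz K r i) *: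
     (Y u (p + r - i%:Z) (Y v (q + i%:Z) w)
      - (-1) ^ r *: Y v (q + r - i%:Z) (Y u (p + i%:Z) w)).
Proof.
have [N1 h1] := va_trunc HVA u v.
have [N2 h2] := va_trunc HVA v w.
have [N3 h3] := va_trunc HVA u w.
exists (`|N1 - r| + `|N2 - q| + `|N3 - p|)%N => N hN.
by apply: (va_jacobi HVA) => i hi; split; [apply: h1 | apply: h2 | apply: h3]; lia.
Qed.

End ModeLinearity.

Section C2Calculus.
Variables (K : numFieldType) (V : lmodType K) (Y : V -> int -> V -> V) (one : V).
Hypothesis HVA : is_vertex_algebra Y one.
Local Notation C2 := (C2 Y).

Lemma associator_formula u v w q r : exists N0 : nat, forall N, (N0 <= N)%N ->
  Y (Y u r v) q w =
  \sum_(i < N) ((-1) ^+ i * binz K r i) *: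
     (Y u (r - i%:Z) (Y v (q + i%:Z) w)
      - (-1) ^ r *: Y v (q + r - i%:Z) (Y u i%:Z w)).
Proof.
have [N0 hN] := borcherds HVA u v w 0 q r.
exists N0.+1 => -[//|N] hN0; have := hN N.+1 (ltnW hN0).
rewrite big_ord_recl /= binz0 scale1r addr0 add0r subr0 big1 ?addr0; last first.
  by move=> i _; rewrite binz0S scale0r.
by move=> ->; apply: eq_bigr => i _; rewrite !add0r.
Qed.

Lemma commutator_formula u v w p q : exists N0 : nat, forall N, (N0 <= N)%N ->
  \sum_(i < N) binz K p i *: Y (Y u i%:Z v) (p + q - i%:Z) w =
  Y u p (Y v q w) - Y v q (Y u p w).
Proof.
have [N0 hN] := borcherds HVA u v w p q 0.
exists N0.+1 => -[//|N] hN0; have := hN N.+1 (ltnW hN0).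
rewrite [in RHS]big_ord_recl /= binz0 mulr1 scale1r [in RHS]big1 ?addr0; last first.
  by move=> i _; rewrite binz0S mulr0 scale0r.
rewrite ?subr0 ?addr0 expr0z scale1r => <-; apply: eq_bigr => i _; by rewrite !add0r.
Qed.

Lemma C2_subspace : is_subspace C2.
Proof. exact: span_subspace. Qed.

Lemma C2_gen u v : C2 (Y u (-2) v).
Proof. by apply: span_gen; exists u, v. Qed.

(* [Y u (-2) one] is [D u], and [(D u)_n = - n u_{n-1}]. *)
Lemma translation_mode u k w :
  Y (Y u (-2) one) (- k.+2%:Z) w = k.+2%:R *: Y u (- k.+3%:Z) w.
Proof.
have [N0 hN] := associator_formula u one w (- k.+2%:Z) (-2).
have hk : (k.+1 < N0 + k.+2)%N by lia.
rewrite (hN (N0 + k.+2)%N (leq_addr _ _)) (bigD1 (Ordinal hk)) //= big1 ?addr0.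
  rewrite !(va_vacuum HVA).
  have -> : (- k.+2%:Z + k.+1%:Z == -1) by apply/eqP; lia.
  have -> : (- k.+2%:Z + -2 - k.+1%:Z == -1) = false by apply/eqP; lia.
  rewrite scaler0 subr0 binzN2 mulrA -exprMn mulrNN mulr1 expr1n mul1r.
  by congr (_ *: Y u _ w); lia.
move=> i /eqP hi; have {}hi : (i : nat) <> k.+1 by move=> h; apply/hi/val_inj.
rewrite !(va_vacuum HVA).
have -> : (- k.+2%:Z + i%:Z == -1) = false by apply/eqP; lia.
have -> : (- k.+2%:Z + -2 - i%:Z == -1) = false by apply/eqP; lia.
by rewrite (mode0r HVA) scaler0 subr0 scaler0.
Qed.

Lemma C2_mode_le u n w : n <= -2 -> C2 (Y u n w).
Proof.
move=> hn; have -> : n = - (`|n| - 2)%N.+2%:Z by lia.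
elim: (`|n| - 2)%N u w => [|k IH] u w; first exact: C2_gen.
have k2 : (k.+2%:R : K) != 0 by rewrite pnatr_eq0.
rewrite -[Y u _ w](scalerK k2) -translation_mode.
exact/(subspaceZ C2_subspace)/IH.
Qed.

Lemma mode0_derivation u v w q :
  Y u 0 (Y v q w) = Y v q (Y u 0 w) + Y (Y u 0 v) q w.
Proof.
have [N0 hN] := commutator_formula u v w 0 q.
move: (hN N0.+1 (leqnSn _)); rewrite big_ord_recl big1 ?addr0 /=; last first.
  by move=> i _; rewrite binz0S scale0r.
by rewrite binz0 scale1r add0r => ->; rewrite addrC subrK.
Qed.

Lemma C2_mode0r u x : C2 x -> C2 (Y u 0 x).
Proof.
move=> C2x; apply: (span_min (subspace_preimr HVA u 0 C2_subspace) _ C2x).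
move=> _ [v [w ->]]; rewrite mode0_derivation.
by apply: (subspaceD C2_subspace); apply: C2_gen.
Qed.

Lemma C2_modeN1r u x : C2 x -> C2 (Y u (-1) x).
Proof.
move=> C2x; apply: (span_min (subspace_preimr HVA u (-1) C2_subspace) _ C2x).
move=> _ [v [w ->]].
have [N0 hN] := commutator_formula u v w (-1) (-2).
rewrite -[Y u _ _](subrK (Y v (-2) (Y u (-1) w))) -(hN N0 (leqnn _)).
apply: (subspaceD C2_subspace); last exact: C2_gen.
apply: (subspace_sum C2_subspace) => i.
by apply/(subspaceZ C2_subspace)/C2_mode_le; lia.
Qed.

Lemma C2_mode01r u n x : in01 n -> C2 x -> C2 (Y u n x).
Proof. by case/orP=> /eqP ->; [apply: C2_mode0r | apply: C2_modeN1r]. Qed.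

Lemma C2_model x q w : q <= 0 -> C2 x -> C2 (Y x q w).
Proof.
move=> hq C2x; apply: (span_min (subspace_preiml HVA q w C2_subspace) _ C2x).
move=> _ [u [v ->]]; have [N0 hN] := associator_formula u v w q (-2).
rewrite (hN N0 (leqnn _)); apply: (subspace_sum C2_subspace) => i.
apply/(subspaceZ C2_subspace)/(subspaceB C2_subspace); first by apply: C2_mode_le; lia.
by apply/(subspaceZ C2_subspace)/C2_mode_le; lia.
Qed.

Lemma skew_C2 u v r : C2 (Y u r v + (-1) ^ r *: Y v r u).
Proof.
have [N0 hN] := borcherds HVA u v one (-1) 0 r.
move: (hN N0.+1 (leqnSn _)).
rewrite big_ord_recl [in RHS]big_ord_recl [in RHS]big1 /=; last first.
  move=> i _; rewrite (va_creation HVA) ?(mode0r HVA) ?sub0r; last by lia.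
  by rewrite (va_creation HVA) ?(mode0r HVA) ?scaler0 ?oppr0 ?scaler0 //; lia.
rewrite ?addr0 ?subr0 ?add0r !binz0 expr0 mul1r !scale1r [Y v 0 one](va_creation HVA) //.
rewrite (mode0r HVA) sub0r !(va_creation1 HVA).
set S := \sum_(i < N0) _ => h; rewrite -(addrK S (Y u r v)) h addrAC addNr add0r.
apply/(subspaceN C2_subspace)/(subspace_sum C2_subspace) => i.
by apply/(subspaceZ C2_subspace)/C2_mode_le; rewrite /bump /=; lia.
Qed.

Lemma commute_C2 u v : C2 (Y u (-1) v - Y v (-1) u).
Proof.
have := skew_C2 u v (-1).
by rewrite -[-1 : int]/(- 1%:Z) -exprnN expr1 invrN1 scaleN1r.
Qed.

Lemma skew0_C2 u v : C2 (Y u 0 v + Y v 0 u).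
Proof. by have := skew_C2 u v 0; rewrite expr0z scale1r. Qed.

Lemma mode0_self_C2 v : C2 (Y v 0 v).
Proof.
have := subspaceZ C2_subspace 2%:R^-1 (skew0_C2 v v).
have two : (2%:R : K) != 0 by rewrite pnatr_eq0.
by rewrite -mulr2n -scaler_nat scalerA mulVf // scale1r.
Qed.

Lemma assoc_C2 u v w : C2 (Y (Y u (-1) v) (-1) w - Y u (-1) (Y v (-1) w)).
Proof.
have [N0 hN] := associator_formula u v w (-1) (-1).
rewrite (hN N0.+1 (leqnSn _)) big_ord_recl /= binzN1 !expr0 mul1r scale1r.
rewrite ?addr0 ?subr0 addrC addrA addKr.
apply: (subspaceD C2_subspace).
  by apply/(subspaceN C2_subspace)/(subspaceZ C2_subspace)/C2_mode_le.
apply: (subspace_sum C2_subspace) => i.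
apply/(subspaceZ C2_subspace)/(subspaceB C2_subspace).
  by apply: C2_mode_le; rewrite /bump /=; lia.
by apply/(subspaceZ C2_subspace)/C2_mode_le; rewrite /bump /=; lia.
Qed.

End C2Calculus.

Lemma span_lindep (K : fieldType) (W : lmodType K) n (f : 'I_n -> W)
    (g : 'I_n.+1 -> W) :
  (forall j, exists c : 'I_n -> K, g j = \sum_i c i *: f i) ->
  exists2 a : 'rV[K]_n.+1, a != 0 & \sum_j a 0 j *: g j = 0.
Proof.
move=> /fin_all_exists [c gc].
pose C : 'M[K]_(n.+1, n) := \matrix_(j, i) c j i.
have /rowV0Pn [a /sub_kermxP aC0 a0] : kermx C != 0.
  by rewrite kermx_eq0 /row_free ltn_eqF // ltnS rank_leq_col.
exists a => //; under eq_bigr do rewrite gc scaler_sumr.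
rewrite exchange_big big1 // => i _; under eq_bigr do rewrite scalerA.
rewrite -scaler_suml.
have -> : \sum_j a 0 j * c j i = (a *m C) 0 i.
  by rewrite mxE; apply: eq_bigr => j _; rewrite mxE.
by rewrite aC0 mxE scale0r.
Qed.

Section PowerRelations.
Variables (K : fieldType) (A : comAlgType K).

Lemma horner_algZXn (x : A) c k : horner_alg x (c *: 'X^k) = c *: x ^+ k.
Proof.
by rewrite -mul_polyC rmorphM /= horner_algC mulr_algl rmorphXn /= horner_algX.
Qed.

Lemma horner_alg_sum (x : A) p : horner_alg x p = \sum_(i < size p) p`_i *: x ^+ i.
Proof.
have {1}-> : p = \sum_(i < size p) p`_i *: 'X^i by rewrite -poly_def coefK.
by rewrite linear_sum; apply: eq_bigr => i _; apply: horner_algZXn.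
Qed.

Lemma pow_eq_of_annihilator (x : A) q : q != 0 -> horner_alg x q = 0 ->
  exists L h, x ^+ L = x ^+ L.+1 * horner_alg x h.
Proof.
move=> q0 qx0; have [L [q1 /implyP/(_ q0) q10 q_eq]] := multiplicity_XsubC q 0.
rewrite subr0 in q_eq; rewrite /root horner_coef0 in q10; set c := q1`_0 in q10.
have [q2 q1_eq] : exists q2, q1 = c%:P + q2 * 'X.
  have /factor_theorem [q2 q2_eq] : root (q1 - c%:P) 0.
    by rewrite /root hornerD hornerN hornerC horner_coef0 subrr.
  by exists q2; rewrite polyC0 subr0 in q2_eq; rewrite -q2_eq addrC subrK.
exists L, (- c^-1 *: q2).
move: qx0; rewrite q_eq q1_eq !rmorphM rmorphD rmorphM rmorphXn /= horner_algC.
rewrite horner_algX mulrDl mulr_algl -mulrA -exprS => /eqP; rewrite addr_eq0 => /eqP.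
move=> cxL; rewrite -mul_polyC rmorphM /= horner_algC mulr_algl -scalerAr mulrC.
by rewrite -[_ * _]opprK -cxL scaleNr scalerN opprK scalerA mulVf // scale1r.
Qed.

Lemma pow_eq_iter (x h : A) L : x ^+ L = x ^+ L.+1 * h ->
  forall k, x ^+ L = x ^+ (L + k) * h ^+ k.
Proof.
move=> xL; elim=> [|k IH]; first by rewrite addn0 expr0 mulr1.
have xLk : x ^+ (L + k) = x ^+ (L + k).+1 * h.
  by rewrite exprD xL mulrAC -exprD addSn.
by rewrite {1}IH xLk -mulrA -exprS addnS.
Qed.

Lemma pow_eq_absorb (x h : A) L : x ^+ L = x ^+ L.+1 * h ->
  x ^+ L * (x ^+ L * h ^+ L) = x ^+ L.
Proof. by move=> xL; rewrite mulrA -exprD -pow_eq_iter. Qed.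

Lemma pow_eq_idem (x h : A) L : x ^+ L = x ^+ L.+1 * h ->
  (x ^+ L * h ^+ L) * (x ^+ L * h ^+ L) = x ^+ L * h ^+ L.
Proof. by move=> xL; rewrite mulrAC pow_eq_absorb. Qed.

Lemma expr_idem (e : A) k : e * e = e -> e ^+ k.+1 = e.
Proof. by move=> ee; elim: k => [|k IH]; rewrite ?expr1 // exprS IH ee. Qed.

Definition is_ideal (P : A -> Prop) := is_subspace P /\ forall b x, P x -> P (b * x).

End PowerRelations.

Section RadicalOfFiniteSubspace.
Variables (K : fieldType) (A : comAlgType K) (U : A -> Prop).
Hypothesis subU : is_subspace U.
Variables (n : nat) (f : 'I_n -> A).
Hypothesis U_span : forall x, U x -> exists c : 'I_n -> K, x = \sum_i c i *: f i.

Definition radical x := exists m, forall t, (m <= t)%N -> U (x ^+ t).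
Definition absorbing x := forall b, exists m, forall t, (m <= t)%N -> U (b * x ^+ t).
Definition unif_absorbing x := exists m, forall b t, (m <= t)%N -> U (b * x ^+ t).

Lemma U_mul_XnM_horner b x m p : (forall t, (m <= t)%N -> U (b * x ^+ t)) ->
  U (b * (x ^+ m * horner_alg x p)).
Proof.
move=> bxU; rewrite horner_alg_sum mulr_sumr mulr_sumr.
apply: (subspace_sum subU) => i; rewrite -!scalerAr -exprD.
by apply/(subspaceZ subU)/bxU; rewrite leq_addr.
Qed.

Lemma radical_pow_eq x : radical x ->
  exists L h, (0 < L)%N /\ x ^+ L = x ^+ L.+1 * horner_alg x h.
Proof.
case=> m xU; pose g (j : 'I_n.+1) := x ^+ (m + j).
have [a /rV0Pn [j aj0] g_dep] := span_lindep (fun j => U_span (xU _ (leq_addr j m))).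
pose q := \sum_j a 0 j *: 'X^(m + j).
have q0 : q != 0.
  move: aj0; apply: contra_neq => /(congr1 (fun p : {poly K} => p`_(m + j))).
  rewrite coef0 coef_sum (bigD1 j) //= coefZ coefXn eqxx mulr1 big1 ?addr0 // => i ij.
  by rewrite coefZ coefXn eqn_add2l eq_sym val_eqE (negbTE ij) mulr0.
have qx0 : horner_alg x q = 0.
  by rewrite -g_dep linear_sum; apply: eq_bigr => i _; apply: horner_algZXn.
have [L [h xL]] := pow_eq_of_annihilator q0 qx0.
by exists L.+1, h; split=> //; rewrite exprS {1}xL mulrA -exprS.
Qed.

Lemma absorbing_unif x : radical x -> absorbing x -> unif_absorbing x.
Proof.
move=> /radical_pow_eq [L [h [_ xL]]] xabs; exists L => b t Lt.
have [m bxU] := xabs b.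
have -> : x ^+ t = x ^+ (t + m) * horner_alg x (h ^+ m).
  by rewrite rmorphXn -(subnK Lt) -addnA !(exprD _ (t - L)) -mulrA -pow_eq_iter.
by apply: U_mul_XnM_horner => s ms; apply: bxU; lia.
Qed.

Lemma unif_absorbing_radical x : unif_absorbing x -> radical x.
Proof. by case=> m xU; exists m => t mt; rewrite -[_ ^+ t]mul1r; apply: xU. Qed.

Lemma unif_absorbingZ c x : unif_absorbing x -> unif_absorbing (c *: x).
Proof.
case=> m xU; exists m => b t mt.
by rewrite exprZn -scalerAr; apply/(subspaceZ subU)/xU.
Qed.

Lemma unif_absorbingD x y :
  unif_absorbing x -> unif_absorbing y -> unif_absorbing (x + y).
Proof.
move=> [m1 xU] [m2 yU]; exists (m1 + m2)%N => b t mt.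
rewrite exprDn mulr_sumr; apply: (subspace_sum subU) => i.
rewrite mulrnAr mulrA; apply: (subspaceMn subU).
have [m2i | im2] := leqP m2 i; first exact: yU.
by rewrite mulrAC; apply: xU; have := ltn_ord i; lia.
Qed.

Lemma unif_absorbingM b x : unif_absorbing x -> unif_absorbing (b * x).
Proof. by case=> m xU; exists m => c t mt; rewrite exprMn mulrA; apply: xU. Qed.

Lemma unif_absorbing_ideal : is_ideal unif_absorbing.
Proof.
split; last exact: unif_absorbingM.
split=> [|c x y ux uy]; last exact: unif_absorbingD (unif_absorbingZ c ux) uy.
exists 1%N => b [//|t] _; rewrite exprS mul0r mulr0; exact: subspace0.
Qed.

Lemma radical_ideal_of_absorbing :
  (forall x, radical x -> absorbing x) -> is_ideal radical.
Proof.
move=> absorb; have unif x : radical x -> unif_absorbing x.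
  by move=> rx; apply: absorbing_unif => //; apply: absorb.
have [[u0 uZD] uM] := unif_absorbing_ideal.
split; last by move=> b x /unif ux; exact/unif_absorbing_radical/uM.
split=> [|c x y /unif ux /unif uy]; first exact: unif_absorbing_radical.
exact/unif_absorbing_radical/uZD.
Qed.

Section IdealRadical.
Hypothesis radicalM : forall b x, radical x -> radical (b * x).

Lemma U_of_radical_unit w e v :
  e * e = e -> w * e = w -> w * v = e -> radical w -> U w.
Proof.
move=> ee we wv rw; have [m wU] := rw.
have [L [p [L0 wL]]] := radical_pow_eq rw.
have eL : e ^+ L = e by rewrite -(prednK L0) expr_idem.
have e_wep : e = w * e * horner_alg w p.
  have -> : e = (w * v) ^+ L by rewrite wv eL.
  by rewrite exprMn {1}wL exprS; ring.
rewrite we in e_wep.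
have w1 : w ^+ 1 = w ^+ 1.+1 * horner_alg w p by rewrite expr1 -{1}we e_wep; ring.
rewrite -[w]expr1 (pow_eq_iter w1 m) -rmorphXn -[_ * _]mul1r.
by apply: U_mul_XnM_horner => t mt; rewrite mul1r; apply: wU; lia.
Qed.

Lemma U_of_nilpotent e z k :
  e * e = e -> radical e -> z * e = z -> z ^+ k = 0 -> U z.
Proof.
(* [e + c z] is a unit of [eA] since [z] is nilpotent. *)
move=> ee re ze zk; have U_ez c : U (e + c *: z).
  apply: (@U_of_radical_unit _ e (e * \sum_(j < k) (- (c *: z)) ^+ j)) => //.
  - by rewrite mulrDl ee -scalerAl ze.
  - have -> : e + c *: z = e * (1 - - (c *: z)).
      by rewrite opprK mulrDr mulr1 -scalerAr mulrC ze.
    rewrite mulrACA ee -opprB mulNr -subrX1 opprB exprNn exprZn zk.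
    by rewrite scaler0 mulr0 subr0 mulr1.
  - have -> : e + c *: z = (1 + c *: z) * e by rewrite mulrDl mul1r -scalerAl ze.
    exact: radicalM.
have := subspaceB subU (U_ez 1) (U_ez 0).
by rewrite scale0r addr0 scale1r addrC addKr.
Qed.

Lemma U_of_idempotent_multiple e y :
  e * e = e -> radical e -> y * e = y -> U y.
Proof.
move=> ee re ye; have ry : radical y by rewrite -ye; apply: radicalM.
have [m yU] := ry; have [L [h [L0 yL]]] := radical_pow_eq ry.
(* [y = y d + (y - y d)], where [y d] is [y ^+ m] times a polynomial in [y] and
   [y - y d] is nilpotent. *)
set d := y ^+ L * horner_alg y h ^+ L.
have dd : d * d = d := pow_eq_idem yL.
have U_yd : U (y * d).
  rewrite -(expr_idem m dd) /d exprMn -!exprM mulrA -exprS -rmorphXn -[_ * _]mul1r.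
  apply: U_mul_XnM_horner => t Lt; rewrite mul1r; apply: yU.
  by have := leq_pmull m.+1 L0; lia.
have U_z : U (y - y * d).
  apply: (U_of_nilpotent ee re (k := L)); first by rewrite mulrBl ye mulrAC ye.
  rewrite -[y in y - _]mulr1 -mulrBr exprMn.
  have -> : (1 - d) ^+ L = 1 - d.
    rewrite -(prednK L0) expr_idem // mulrBl mul1r mulrBr mulr1 dd.
    by rewrite subrr subr0.
  by rewrite mulrBr mulr1 /d pow_eq_absorb // subrr.
by have := subspaceD subU U_yd U_z; rewrite addrC subrK.
Qed.

Lemma radical_unif_absorbing x : radical x -> unif_absorbing x.
Proof.
move=> rx; have [L [h [L0 xL]]] := radical_pow_eq rx.
set e := x ^+ L * horner_alg x h ^+ L.
have re : radical e.
  have [L' eL] : exists L', L = L'.+1 by exists L.-1; lia.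
  have -> : e = (x ^+ L' * horner_alg x h ^+ L) * x by rewrite /e eL exprS; ring.
  exact: radicalM.
exists L => b t Lt; apply: (U_of_idempotent_multiple (pow_eq_idem xL) re).
by rewrite -mulrA -(subnK Lt) exprD -mulrA pow_eq_absorb.
Qed.

End IdealRadical.

Lemma absorbing_radicalP :
  (forall x, radical x -> absorbing x) <-> is_ideal radical.
Proof.
split=> [|[_ radicalM] x rx b]; first exact: radical_ideal_of_absorbing.
by have [m xU] := radical_unif_absorbing radicalM rx; exists m => t; apply: xU.
Qed.

End RadicalOfFiniteSubspace.

Section Iterates.
Variables (K : numFieldType) (V : lmodType K) (Y : V -> int -> V -> V) (one : V).
Hypothesis HVA : is_vertex_algebra Y one.
Local Notation C2 := (C2 Y).

Lemma iter_mode_nseq v k : iter_mode Y v (nseq k (-1)) v = powrep Y v k.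
Proof. by elim: k => //= k ->. Qed.

Lemma all01_nseq k : all01 (nseq k (-1)).
Proof. by elim: k. Qed.

Lemma C2_mode0_powrep v k : C2 (Y v 0 (powrep Y v k)).
Proof.
elim: k => [|k IH]; first exact: (mode0_self_C2 HVA).
rewrite /= (mode0_derivation HVA); apply: (subspaceD (C2_subspace Y)).
  exact: (C2_modeN1r HVA).
by apply: (C2_model HVA) => //; apply: (mode0_self_C2 HVA).
Qed.

Lemma iter_mode_cases v s : all01 s ->
  C2 (iter_mode Y v s v) \/ iter_mode Y v s v = powrep Y v (size s).
Proof.
elim: s => [|n s IH] /=; first by right.
case/andP=> n01 /IH [C2s | ->]; first by left; apply: (C2_mode01r HVA).
by case/orP: n01 => /eqP ->; [left; apply: C2_mode0_powrep | right].
Qed.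

Variables (M : V -> Prop) (C2M : forall x, C2 x -> M x).

Lemma r01_rep_r v : r01 Y M v <-> rep_r Y M v.
Proof.
split=> [[m vM] | [m [m1 vM]]].
  exists m.+1; split=> // t mt; rewrite -iter_mode_nseq.
  by apply: vM; rewrite ?all01_nseq // size_nseq; lia.
exists m => s s01 ms; have [/C2M // | ->] := iter_mode_cases v s01.
by apply: (vM (size s).+1); lia.
Qed.

Lemma r01_of_sr01 v : sr01 Y M v -> r01 Y M v.
Proof.
case=> /(_ one) [m vM] _; exists m => s s01 ms.
by have := vM s (-1) erefl s01 ms; rewrite (va_vacuum HVA).
Qed.

End Iterates.

Section QuotientByC2.
Variables (K : numFieldType) (V : lmodType K) (Y : V -> int -> V -> V) (one : V).
Hypothesis HVA : is_vertex_algebra Y one.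
Hypothesis one_notin_C2 : ~ C2 Y one.
Local Notation C2 := (C2 Y).
Local Notation subC2 := (C2_subspace Y).
Local Open Scope quotient_scope.

Definition eqmodC2 (x y : V) : bool := `[< C2 (x - y) >].

Lemma eqmodC2_refl : reflexive eqmodC2.
Proof. by move=> x; apply/asboolP; rewrite subrr; apply: (subspace0 subC2). Qed.

Lemma eqmodC2_sym : symmetric eqmodC2.
Proof.
by move=> x y; apply/asboolP/asboolP => /(subspaceN subC2); rewrite opprB.
Qed.

Lemma eqmodC2_trans : transitive eqmodC2.
Proof.
move=> y x z /asboolP xy /asboolP yz; apply/asboolP.
by have := subspaceD subC2 xy yz; rewrite addrA subrK.
Qed.

Definition eqmodC2_rel := EquivRel eqmodC2 eqmodC2_refl eqmodC2_sym eqmodC2_trans.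
Definition quotC2 := {eq_quot eqmodC2_rel}.
HB.instance Definition _ := Choice.on quotC2.
Definition pi : V -> quotC2 := \pi_quotC2.
Definition rep : quotC2 -> V := repr.

Lemma repK : cancel rep pi.
Proof. exact: reprK. Qed.

Lemma quotC2W (P : quotC2 -> Prop) : (forall x, P (pi x)) -> forall a, P a.
Proof. by move=> Ppi a; rewrite -[a]repK. Qed.

Lemma eqmodC2P x y : pi x = pi y <-> C2 (x - y).
Proof. by split=> [/eqmodP/asboolP // | xy]; apply/eqmodP/asboolP. Qed.

Lemma C2_sub_repr x : C2 (x - rep (pi x)).
Proof. by apply/eqmodC2P; rewrite repK. Qed.

Definition zeroC2 : quotC2 := pi 0.
Definition oppC2 (a : quotC2) : quotC2 := pi (- rep a).
Definition addC2 (a b : quotC2) : quotC2 := pi (rep a + rep b).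
Definition oneC2 : quotC2 := pi one.
Definition mulC2 (a b : quotC2) : quotC2 := pi (Y (rep a) (-1) (rep b)).
Definition scaleC2 (c : K) (a : quotC2) : quotC2 := pi (c *: rep a).

Lemma pi_opp x : pi (- x) = oppC2 (pi x).
Proof. by apply/eqmodC2P; rewrite -opprD; apply/(subspaceN subC2)/C2_sub_repr. Qed.

Lemma pi_add x y : pi (x + y) = addC2 (pi x) (pi y).
Proof.
apply/eqmodC2P; rewrite opprD addrACA.
by apply: (subspaceD subC2); apply: C2_sub_repr.
Qed.

Lemma pi_scale c x : pi (c *: x) = scaleC2 c (pi x).
Proof. by apply/eqmodC2P; rewrite -scalerBr; apply/(subspaceZ subC2)/C2_sub_repr. Qed.

Lemma pi_mul x y : pi (Y x (-1) y) = mulC2 (pi x) (pi y).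
Proof.
apply/eqmodC2P; set x' := rep (pi x); set y' := rep (pi y).
have -> : Y x (-1) y - Y x' (-1) y' = Y (x - x') (-1) y + Y x' (-1) (y - y').
  by rewrite (modeBl HVA) (modeBr HVA) addrA subrK.
apply: (subspaceD subC2); first exact/(C2_model HVA)/C2_sub_repr.
exact/(C2_modeN1r HVA)/C2_sub_repr.
Qed.

Lemma addC2A : associative addC2.
Proof.
move=> a b c; elim/quotC2W: a => x; elim/quotC2W: b => y; elim/quotC2W: c => z.
by rewrite -!pi_add addrA.
Qed.

Lemma addC2C : commutative addC2.
Proof.
by move=> a b; elim/quotC2W: a => x; elim/quotC2W: b => y; rewrite -!pi_add addrC.
Qed.

Lemma add0C2 : left_id zeroC2 addC2.
Proof. by elim/quotC2W=> x; rewrite -pi_add add0r. Qed.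

Lemma addNC2 : left_inverse zeroC2 oppC2 addC2.
Proof. by elim/quotC2W=> x; rewrite -pi_opp -pi_add addNr. Qed.

HB.instance Definition _ := GRing.isZmodule.Build quotC2 addC2A addC2C add0C2 addNC2.

Lemma piD x y : pi (x + y) = pi x + pi y. Proof. exact: pi_add. Qed.

Lemma mulC2A : associative mulC2.
Proof.
move=> a b c; elim/quotC2W: a => x; elim/quotC2W: b => y; elim/quotC2W: c => z.
by rewrite -!pi_mul; apply/esym/eqmodC2P/(assoc_C2 HVA).
Qed.

Lemma mulC2C : commutative mulC2.
Proof.
move=> a b; elim/quotC2W: a => x; elim/quotC2W: b => y.
by rewrite -!pi_mul; apply/eqmodC2P/(commute_C2 HVA).
Qed.

Lemma mul1C2 : left_id oneC2 mulC2.
Proof. by elim/quotC2W=> x; rewrite -pi_mul (va_vacuum HVA). Qed.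

Lemma mulC2Dl : left_distributive mulC2 addC2.
Proof.
move=> a b c; elim/quotC2W: a => x; elim/quotC2W: b => y; elim/quotC2W: c => z.
by rewrite -pi_add -!pi_mul -pi_add (modeDl HVA).
Qed.

Lemma oneC2_neq0 : oneC2 != zeroC2.
Proof. by apply/eqP => /eqmodC2P; rewrite subr0. Qed.

HB.instance Definition _ :=
  GRing.Zmodule_isComNzRing.Build quotC2 mulC2A mulC2C mul1C2 mulC2Dl oneC2_neq0.

Lemma piM x y : pi (Y x (-1) y) = pi x * pi y. Proof. exact: pi_mul. Qed.

Lemma scaleC2A a b u : scaleC2 a (scaleC2 b u) = scaleC2 (a * b) u.
Proof. by elim/quotC2W: u => x; rewrite -!pi_scale scalerA. Qed.

Lemma scale1C2 : left_id 1 scaleC2.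
Proof. by elim/quotC2W=> x; rewrite -pi_scale scale1r. Qed.

Lemma scaleC2Dr : right_distributive scaleC2 +%R.
Proof.
move=> c a b; elim/quotC2W: a => x; elim/quotC2W: b => y.
by rewrite -piD -!pi_scale -piD scalerDr.
Qed.

Lemma scaleC2Dl u : {morph scaleC2^~ u : a b / a + b}.
Proof. by elim/quotC2W: u => x a b; rewrite -!pi_scale -piD scalerDl. Qed.

HB.instance Definition _ :=
  GRing.Zmodule_isLmodule.Build K quotC2 scaleC2A scale1C2 scaleC2Dr scaleC2Dl.

Lemma piZ c x : pi (c *: x) = c *: pi x. Proof. exact: pi_scale. Qed.

Lemma scaleC2Al (c : K) (a b : quotC2) : c *: (a * b) = (c *: a) * b.
Proof.
elim/quotC2W: a => x; elim/quotC2W: b => y.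
by rewrite -piM -!piZ -piM (modeZl HVA).
Qed.

HB.instance Definition _ := GRing.Lmodule_isLalgebra.Build K quotC2 scaleC2Al.
HB.instance Definition _ := GRing.Lalgebra_isComAlgebra.Build K quotC2.

Lemma pi_powrep v k : pi (powrep Y v k) = pi v ^+ k.+1.
Proof. by elim: k => [|k IH]; rewrite ?expr1 //= piM IH -exprS. Qed.

Lemma pi_mode0_powrep b v t :
  pi (Y b 0 (powrep Y v t)) = (pi (Y b 0 v) * pi v ^+ t) *+ t.+1.
Proof.
elim: t => [|t IH] /=; first by rewrite expr0 mulr1.
by rewrite (mode0_derivation HVA) piD !piM IH pi_powrep !exprS; ring.
Qed.

Lemma pi_mode0N x y : pi (Y x 0 y) = - pi (Y y 0 x).
Proof.
apply/eqP; rewrite -addr_eq0 -piD; apply/eqP/eqmodC2P.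
by rewrite subr0; apply: (skew0_C2 HVA).
Qed.

Variables (M : V -> Prop) (subM : is_subspace M) (C2M : forall x, C2 x -> M x).
Hypothesis finM : fin_dim_mod_C2 Y M.

Definition MC2 (a : quotC2) := M (rep a).

Lemma MC2_pi x : MC2 (pi x) <-> M x.
Proof.
have M_eqmod y z : C2 (y - z) -> M z -> M y.
  by move=> /C2M yz Mz; have := subspaceD subM yz Mz; rewrite subrK.
split; first exact/M_eqmod/C2_sub_repr.
by apply: M_eqmod; have := subspaceN subC2 (C2_sub_repr x); rewrite opprB.
Qed.

Lemma MC2_subspace : is_subspace MC2.
Proof.
split=> [|c]; first exact/MC2_pi/(subspace0 subM).
apply: quotC2W => x; apply: quotC2W => y.
by rewrite -piZ -piD => /MC2_pi Mx /MC2_pi My; apply/MC2_pi/(subspaceZD subM).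
Qed.

Lemma MC2_span : exists n (f : 'I_n -> quotC2),
  forall a, MC2 a -> exists c : 'I_n -> K, a = \sum_i c i *: f i.
Proof.
have [n [f [_ fspan]]] := finM; exists n, (pi \o f).
elim/quotC2W=> x /MC2_pi /fspan [c xc]; exists c.
have pi0 : pi 0 = 0 by [].
transitivity (pi (\sum_i c i *: f i)); first exact/eqmodC2P.
by rewrite (big_morph pi piD pi0); apply: eq_bigr => i _; rewrite piZ.
Qed.

Lemma rep_r_radical v : rep_r Y M v <-> radical MC2 (pi v).
Proof.
split=> [[m [m1 vM]] | [m vU]].
  exists m => t mt; rewrite -(prednK (leq_trans m1 mt)) -pi_powrep.
  exact/MC2_pi/vM.
exists m.+1; split=> // t mt; apply/MC2_pi.
by rewrite pi_powrep prednK; [apply: vU | ]; lia.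
Qed.

Lemma absorbing_of_lsr01 v : lsr01 Y M v -> absorbing MC2 (pi v).
Proof.
move=> vlsr; elim/quotC2W=> b; have [m bM] := vlsr b; exists m.+1 => t mt.
have := bM (nseq t.-1 (-1)) (-1) erefl (all01_nseq _); rewrite size_nseq.
rewrite iter_mode_nseq => /(_ ltac:(lia)) /MC2_pi.
by rewrite piM pi_powrep prednK //; lia.
Qed.

Lemma sr01_of_unif_absorbing v : unif_absorbing MC2 (pi v) -> sr01 Y M v.
Proof.
case=> m vU; split=> [b | w]; exists m => s k k01 s01 ms;
  have [C2s | ->] := iter_mode_cases HVA v s01.
- exact/C2M/(C2_mode01r HVA).
- apply/MC2_pi; case/orP: k01 => /eqP ->.
    by rewrite pi_mode0_powrep; apply/(subspaceMn MC2_subspace)/vU.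
  by rewrite piM pi_powrep; apply: vU; lia.
- by apply/C2M/(C2_model HVA); first by case/orP: k01 => /eqP ->.
- apply/MC2_pi; case/orP: k01 => /eqP ->.
    rewrite pi_mode0N pi_mode0_powrep.
    by apply/(subspaceN MC2_subspace)/(subspaceMn MC2_subspace)/vU.
  by rewrite piM pi_powrep mulrC; apply: vU; lia.
Qed.

Lemma MZ01_absorbingP :
  MZ01_subspace Y M <-> (forall a, radical MC2 a -> absorbing MC2 a).
Proof.
have [n [f fspan]] := MC2_span.
split=> [MZ a | absorb v].
  elim/quotC2W: a => v /rep_r_radical /(r01_rep_r HVA C2M) /MZ [vlsr _].
  exact: absorbing_of_lsr01.
split; last exact: (r01_of_sr01 HVA).
move=> /(r01_rep_r HVA C2M) /rep_r_radical rv; apply: sr01_of_unif_absorbing.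
exact: (absorbing_unif MC2_subspace fspan rv (absorb _ rv)).
Qed.

Lemma ideal_preimageP :
  is_ideal_preimage Y (rep_r Y M) <-> is_ideal (radical MC2).
Proof.
split=> [[_ [r0 rZD] rM] | [[r0 rZD] rM]].
  split; first split; first exact/rep_r_radical.
    move=> c a b; elim/quotC2W: a => x; elim/quotC2W: b => y.
    rewrite -piZ -piD => /rep_r_radical rx /rep_r_radical ry.
    exact/rep_r_radical/rZD.
  move=> a b; elim/quotC2W: a => x; elim/quotC2W: b => y.
  by rewrite -piM => /rep_r_radical ry; apply/rep_r_radical/rM.
split; last by move=> b x /rep_r_radical rx; apply/rep_r_radical; rewrite piM; apply: rM.
  move=> x C2x; apply/rep_r_radical.
  by have -> : pi x = 0 by apply/eqmodC2P; rewrite subr0.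
split; first exact/rep_r_radical.
move=> c x y /rep_r_radical rx /rep_r_radical ry.
by apply/rep_r_radical; rewrite piD piZ; apply: rZD.
Qed.

Lemma MZ01_ideal_nondegenerate :
  MZ01_subspace Y M <-> is_ideal_preimage Y (rep_r Y M).
Proof.
have [n [f fspan]] := MC2_span.
apply: (iff_trans MZ01_absorbingP); apply: (iff_trans _ (iff_sym ideal_preimageP)).
exact: (absorbing_radicalP MC2_subspace fspan).
Qed.

End QuotientByC2.

(* If 1 is in C_2(V), then C_2(V) = V and A = 0, a ring MathComp excludes; hence the
   separate case. *)
Lemma MZ01_ideal_degenerate (K : numFieldType) (V : lmodType K)
    (Y : V -> int -> V -> V) (one : V) (HVA : is_vertex_algebra Y one)
    (M : V -> Prop) (C2M : forall x, C2 Y x -> M x) :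
  C2 Y one -> MZ01_subspace Y M <-> is_ideal_preimage Y (rep_r Y M).
Proof.
move=> C2one; have allM x : M x.
  by apply/C2M; rewrite -[x](va_vacuum HVA (-1)) /=; apply: (C2_model HVA).
have rep_rT x : rep_r Y M x by exists 1%N; split=> // t _; apply: allM.
split=> _; first by split=> [x _ | | b x _] //; split=> *; apply: rep_rT.
move=> v; split=> _; last by exists 0%N => *; apply: allM.
by split=> [b | w]; exists 0%N => *; apply: allM.
Qed.

Theorem mainTheorem11 (R : realType) (V : lmodType R[i])
    (Y : V -> int -> V -> V) (one : V) (HVA : is_vertex_algebra Y one)
    (M : V -> Prop) (HM : is_subspace M)
    (HC2M : forall x, C2 Y x -> M x) (Hfin : fin_dim_mod_C2 Y M) :
  MZ01_subspace Y M <-> is_ideal_preimage Y (rep_r Y M).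
Proof.
have [C2one | C2one] := pselect (C2 Y one).
  exact: (MZ01_ideal_degenerate HVA HC2M C2one).
exact: (MZ01_ideal_nondegenerate HVA C2one HM HC2M Hfin).
Qed.
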